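(* If $S\subseteq\mathbb{N}^{\mathbb{N}}$ is overguessable, then $S$ is defined by some sentence $\exists x\,\forall y\,\phi$ of $\mathscr{L}_{\max}$ with $\phi$ quantifier-free.
   Context: $\mathbb{N}^{<\mathbb{N}}$ denotes the finite sequences of naturals. $S\subseteq\mathbb{N}^{\mathbb{N}}$ is overguessable if there is a function $\mu:\mathbb{N}^{<\mathbb{N}}\to\mathbb{N}\cup\{\infty\}$ such that (1) for every $f\in S$, the values $\mu(f(0),\ldots,f(n))$ are bounded by some finite number for all sufficiently large $n$; and (2) for every $f\notin S$, $\mu(f(0),\ldots,f(n))\to\infty$ as $n\to\infty$. The language $\mathscr{L}_{\max}$ is a first-order language extended with ellipses: constant symbols $\mathbf{n}$ (also $\bar n$) for each $n\in\mathbb{N}$; an $n$-ary function symbol $\tilde w$ for each $w:\mathbb{N}^n\to\mathbb{N}$ ($n>0$); an $n$-ary predicate symbol $\tilde p$ for each $p\subseteq\mathbb{N}^n$ ($n>0$); an $\mathbb{N}^{<\mathbb{N}}$-ary function symbol $\tilde G$ for each $G:\mathbb{N}^{<\mathbb{N}}\to\mathbb{N}$ (applicable to any finite number of arguments); a unary function symbol $\mathbf{f}$; and a symbol $\cdots_x$ for each variable $x$. Besides the usual terms, for $\mathbb{N}^{<\mathbb{N}}$-ary $G$, terms $u,v$ and variable $x$, $G(u(\mathbf{0}),\cdots_x,u(v))$ is a term with free variables $(FV(u)\setminus\{x\})\cup FV(v)$. Formulas are built as usual. For $f:\mathbb{N}\to\mathbb{N}$, $\mathscr{M}_f$ is the structure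 on $\mathbb{N}$ interpreting every symbol as the object it names and $\mathbf{f}$ as $f$; terms are evaluated as usual, plus $G(u(\mathbf{0}),\cdots_x,u(v))^{s}=G\big(u(x|\mathbf{0})^{s},\ldots,u(x|\overline{v^{s}})^{s}\big)$ under an assignment $s$, where $u(x|c)$ is substitution of the constant $c$ for $x$ in $u$. A sentence $\phi$ defines $S\subseteq\mathbb{N}^{\mathbb{N}}$ if for every $f:\mathbb{N}\to\mathbb{N}$, $\mathscr{M}_f\models\phi$ iff $f\in S$. *)

From Stdlib Require Import List Arith Fin.
Import ListNotations.

Definition var := nat.

(* Terms of L_max.
   - TVar x            : variable x
   - TConst n          : the constant symbol  n-bar
   - TFun n w args     : an (n+1)-ary function symbol  w~  (w : N^(n+1) -> N)
   - TBig G args       : the N^{<N}-ary symbol G~ applied to finitely many args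
   - Tf t              : the unary function symbol  f
   - TEll G u x v      : the ellipsis term  G(u(0), ..._x, u(v))            *)
Inductive term : Type :=
| TVar (x : var)
| TConst (n : nat)
| TFun (n : nat) (w : (Fin.t (S n) -> nat) -> nat) (args : Fin.t (S n) -> term)
| TBig (G : list nat -> nat) (args : list term)
| Tf (t : term)
| TEll (G : list nat -> nat) (u : term) (x : var) (v : term).

Inductive formula : Type :=
| FEq (t1 t2 : term)
| FPred (n : nat) (p : (Fin.t (S n) -> nat) -> Prop) (args : Fin.t (S n) -> term)
| FNot (A : formula)
| FAnd (A B : formula)
| FOr (A B : formula)
| FImp (A B : formula)
| FAll (x : var) (A : formula)
| FEx (x : var) (A : formula).

Fixpoint free_in_term (y : var) (t : term) : Prop :=
  match t with
  | TVar x => y = x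
  | TConst _ => False
  | TFun n _ args => exists i : Fin.t (S n), free_in_term y (args i)
  | TBig _ args =>
      (fix go (l : list term) : Prop :=
         match l with
         | [] => False
         | t :: l' => free_in_term y t \/ go l'
         end) args
  | Tf t => free_in_term y t
  | TEll _ u x v => (free_in_term y u /\ y <> x) \/ free_in_term y v
  end.

Fixpoint free_in (y : var) (A : formula) : Prop :=
  match A with
  | FEq t1 t2 => free_in_term y t1 \/ free_in_term y t2
  | FPred n _ args => exists i : Fin.t (S n), free_in_term y (args i)
  | FNot B => free_in y B
  | FAnd B C | FOr B C | FImp B C => free_in y B \/ free_in y C
  | FAll x B | FEx x B => free_in y B /\ y <> x
  end.

Definition sentence (A : formula) : Prop := forall y, ~ free_in y A.

Fixpoint qf (A : formula) : Prop :=
  match A with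
  | FEq _ _ | FPred _ _ _ => True
  | FNot B => qf B
  | FAnd B C | FOr B C | FImp B C => qf B /\ qf C
  | FAll _ _ | FEx _ _ => False
  end.

Definition assignment := var -> nat.

Definition upd (s : assignment) (x : var) (c : nat) : assignment :=
  fun y => if Nat.eqb y x then c else s y.

(* Evaluation of terms in M_f under assignment s.  The value of u(x|c)
   (substitution of the constant c-bar for x) under s is the value of u
   under s[x := c]. *)
Fixpoint eval (f : nat -> nat) (s : assignment) (t : term) : nat :=
  match t with
  | TVar x => s x
  | TConst n => n
  | TFun _ w args => w (fun i => eval f s (args i))
  | TBig G args =>
      G ((fix go (l : list term) : list nat :=
            match l with
            | [] => []
            | t :: l' => eval f s t :: go l'
            end) args)
  | Tf t => f (eval f s t)
  | TEll G u x v =>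
      G (map (fun c => eval f (upd s x c) u) (seq 0 (S (eval f s v))))
  end.

Fixpoint sat (f : nat -> nat) (s : assignment) (A : formula) : Prop :=
  match A with
  | FEq t1 t2 => eval f s t1 = eval f s t2
  | FPred _ p args => p (fun i => eval f s (args i))
  | FNot B => ~ sat f s B
  | FAnd B C => sat f s B /\ sat f s C
  | FOr B C => sat f s B \/ sat f s C
  | FImp B C => sat f s B -> sat f s C
  | FAll x B => forall c, sat f (upd s x c) B
  | FEx x B => exists c, sat f (upd s x c) B
  end.

(* M_f |= phi for a sentence phi (the assignment is irrelevant; we
   quantify over all of them). *)
Definition models (f : nat -> nat) (A : formula) : Prop :=
  forall s : assignment, sat f s A.

Definition defines (A : formula) (S : (nat -> nat) -> Prop) : Prop :=
  sentence A /\ forall f : nat -> nat, models f A <-> S f.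

Definition prefix (f : nat -> nat) (n : nat) : list nat := map f (seq 0 (S n)).

(* N ∪ {∞} is represented as option nat, with None = ∞. *)
Definition overguessable (S : (nat -> nat) -> Prop) : Prop :=
  exists mu : list nat -> option nat,
    (forall f, S f ->
       exists B N, forall n, N <= n -> exists b, mu (prefix f n) = Some b /\ b <= B)
    /\
    (forall f, ~ S f ->
       forall B, exists N, forall n, N <= n ->
         match mu (prefix f n) with
         | None => True
         | Some b => B < b
         end).

(* A guessing function mu for S certifies membership of f by a single number x:
   from stage x on, mu returns a value at most x on the prefixes of f.  Ellipsis
   terms let one quantifier-free formula read off mu at the prefix (f(0),...,f(y)),
   so "exists x, forall y >= x, mu(f(0),...,f(y)) <= x" is an exists-forall sentence;
   it holds exactly for the f in S because mu tends to infinity along every f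
   outside S. *)
From Stdlib Require Import List Arith Bool Lia Classical.
Import ListNotations.
Local Open Scope bool_scope.

Definition eventually_bounded (mu : list nat -> option nat) (f : nat -> nat) : Prop :=
  exists x, forall y, x <= y -> exists b, mu (prefix f y) = Some b /\ b <= x.

Lemma overguessable_eventually_bounded (S : (nat -> nat) -> Prop) :
  overguessable S ->
  exists mu, forall f, S f <-> eventually_bounded mu f.
Proof.
  intros [mu [bounded_in unbounded_out]]; exists mu; intros f; split.
  - intros Sf; destruct (bounded_in f Sf) as [B [N HN]].
    exists (max B N); intros y Hy.
    destruct (HN y ltac:(lia)) as [b [E Hb]]; exists b; split; [exact E | lia].
  - intros [x Hx]; apply NNPP; intros notSf.
    destruct (unbounded_out f notSf x) as [N HN].
    specialize (HN (max N x) ltac:(lia)).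
    destruct (Hx (max N x) ltac:(lia)) as [b [E Hb]].
    rewrite E in HN; lia.
Qed.

Definition option_code (mu : list nat -> option nat) (l : list nat) : nat :=
  match mu l with None => 0 | Some b => S b end.

Lemma option_code_bounded (mu : list nat -> option nat) (l : list nat) (x : nat) :
  (0 <? option_code mu l) && (option_code mu l <=? S x) = true <->
  exists b, mu l = Some b /\ b <= x.
Proof.
  unfold option_code; destruct (mu l) as [b|]; cbn.
  - rewrite Nat.leb_le; split; [intros; exists b; split; [reflexivity | lia]|].
    intros [b' [[= <-] Hb]]; lia.
  - split; [discriminate | intros [b [E _]]; discriminate].
Qed.

Lemma eval_ellipsis_prefix (f : nat -> nat) (s : assignment) (G : list nat -> nat)
    (z y : var) :
  eval f s (TEll G (Tf (TVar z)) z (TVar y)) = G (prefix f (s y)).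
Proof.
  cbn [eval]; unfold prefix; f_equal; apply map_ext; intros c.
  unfold upd; now rewrite Nat.eqb_refl.
Qed.

(* The guard reads [x; y; c] as "y >= x implies c codes a value at most x". *)
Definition guard (l : list nat) : nat :=
  match l with
  | [x; y; c] => Nat.b2n (implb (x <=? y) ((0 <? c) && (c <=? S x)))
  | _ => 0
  end.

(* Variables: 0 is the bound x, 1 the stage y, 2 the index bound by the ellipsis. *)
Definition bounded_from (mu : list nat -> option nat) : formula :=
  FEq (TBig guard [TVar 0; TVar 1; TEll (option_code mu) (Tf (TVar 2)) 2 (TVar 1)])
      (TConst 1).

Lemma sat_bounded_from (mu : list nat -> option nat) (f : nat -> nat) (s : assignment) :
  sat f s (bounded_from mu) <->
  (s 0 <= s 1 -> exists b, mu (prefix f (s 1)) = Some b /\ b <= s 0).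
Proof.
  unfold bounded_from; cbn [sat].
  change (eval f s (TBig guard _)) with
    (guard [s 0; s 1; eval f s (TEll (option_code mu) (Tf (TVar 2)) 2 (TVar 1))]).
  rewrite eval_ellipsis_prefix, <- option_code_bounded; cbn.
  destruct (Nat.leb_spec (s 0) (s 1)) as [le | gt]; cbn.
  - destruct (_ && _); cbn; split; intros H; auto; [discriminate | ].
    now specialize (H le).
  - split; [lia | reflexivity].
Qed.

Lemma models_bounded_from (mu : list nat -> option nat) (f : nat -> nat) :
  models f (FEx 0 (FAll 1 (bounded_from mu))) <-> eventually_bounded mu f.
Proof.
  split.
  - intros H; destruct (H (fun _ => 0)) as [x Hx]; exists x; intros y Hy.
    exact (proj1 (sat_bounded_from mu f _) (Hx y) Hy).
  - intros [x Hx] s; exists x; intros y.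
    apply sat_bounded_from; exact (Hx y).
Qed.

Lemma bounded_from_sentence (mu : list nat -> option nat) :
  sentence (FEx 0 (FAll 1 (bounded_from mu))).
Proof. intros w Hw; cbn in Hw; lia. Qed.

Theorem proposition4p5 (S : (nat -> nat) -> Prop) :
  overguessable S ->
  exists (x y : var) (phi : formula),
    qf phi /\ defines (FEx x (FAll y phi)) S.
Proof.
  intros HS; destruct (overguessable_eventually_bounded S HS) as [mu Hmu].
  exists 0, 1, (bounded_from mu); split; [exact I | split].
  - apply bounded_from_sentence.
  - intros f; rewrite models_bounded_from; symmetry; apply Hmu.
Qed.
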